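(* For $G,H,H'\in\mathfrak{D}$ and $\xi\in\mathcal{H}(G,H)$, let $$\Theta_{G,H'}(\xi)=\{\zeta\in\mathcal{H}(G,H'):\mathcal{G}(\zeta)=\mathcal{G}(\xi)\}.$$ Let $R,S\in\mathfrak{D}$ and $\mathfrak{D}'\subseteq\mathfrak{D}$. Then $R\sqsubseteq_\Gamma S$ with respect to $\mathfrak{D}'$ holds if and only if $$\#\Theta_{G,R}(\xi)\le\#\Theta_{G,S}(\xi)\quad\text{for all } G\in\mathfrak{D}' \text{ and all } \xi\in\mathcal{H}(G,R).$$
   Context: **Digraphs and homomorphisms.** - A digraph $G$ is a pair $(V(G),A(G))$, where $V(G)$ is a finite non-empty set and $A(G)\subseteq V(G)\times V(G)$. Arcs are written $vw$. - A homomorphism $\xi:G\to H$ is a map $V(G)\to V(H)$ with $\xi(v)\xi(w)\in A(H)$ for all $vw\in A(G)$. $\mathcal{H}(G,H)$ is the set of homomorphisms. - $\mathfrak{D}$ is the class of all digraphs. **Connectivity.** - Two vertices $u,w$ are adjacent if $uw\in A(G)$ or $wu\in A(G)$. - For $X\subseteq V(G)$ and $v,w\in X$, the vertices $v$ and $w$ are connected in $X$ if $v=w$, or if there are $z_0=v,\dots,z_I=w$ in $X$ with consecutive terms adjacent. - $\gamma_X(v)$ is the set of $w\in X$ connected to $v$ in $X$. - $\Gamma_\xi(v):=\gamma_{\xi^{-1}(\xi(v))}(v)$. **The quotient digraph.** For $\xi\in\mathcal{H}(G,H)$, $\mathcal{G}(\xi)$ is the digraph with: - vertex set $\{\Gamma_\xi(v):v\in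 V(G)\}$, a partition of $V(G)$; - arcs $\mathfrak{a}\mathfrak{b}$ whenever there are $a\in\mathfrak{a}$, $b\in\mathfrak{b}$ with $ab\in A(G)$. **Schemes.** - For a class $\mathfrak{D}'$, let $\mathfrak{D}'_r$ be a fixed system of representatives up to isomorphism. - A Hom-scheme from $R$ to $S$ with respect to $\mathfrak{D}'$ is a family of maps $\rho_G:\mathcal{H}(G,R)\to\mathcal{H}(G,S)$, $G\in\mathfrak{D}'_r$. - It is strong if all $\rho_G$ are injective. - It is a $\Gamma$-scheme if $\Gamma_{\rho_G(\xi)}(v)=\Gamma_\xi(v)$ for all $G\in\mathfrak{D}'_r$, $\xi\in\mathcal{H}(G,R)$ and $v\in V(G)$. - $R\sqsubseteq_\Gamma S$ with respect to $\mathfrak{D}'$ means that a strong $\Gamma$-scheme exists. *)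

From mathcomp Require Import all_boot.
Set Implicit Arguments. Unset Strict Implicit. Unset Printing Implicit Defensive.

Record digraph := Digraph {
  vert :> finType;
  arc : rel vert;
  vert_nonempty : 0 < #|vert| }.

Definition is_hom (G H : digraph) (f : {ffun G -> H}) : bool :=
  [forall v : G, forall w : G, arc v w ==> arc (f v) (f w)].

Definition homs (G H : digraph) := {f : {ffun G -> H} | is_hom f}.

Definition adj (G : digraph) : rel G := fun u w => arc u w || arc w u.

Definition gammaX (G : digraph) (X : {set G}) (v : G) : {set G} :=
  [set w in X | connect (fun x y => [&& x \in X, y \in X & adj x y]) v w].

Definition Gam (G H : digraph) (xi : G -> H) (v : G) : {set G} :=
  gammaX [set u : G | xi u == xi v] v.

Definition qverts (G H : digraph) (xi : G -> H) : {set {set G}} :=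
  [set Gam xi v | v : G].

Definition qarcs (G H : digraph) (xi : G -> H) : {set {set G} * {set G}} :=
  [set p | [&& p.1 \in qverts xi, p.2 \in qverts xi &
             [exists a in p.1, exists b in p.2, arc a b]]].

Definition quotient_digraph (G H : digraph) (xi : G -> H) :=
  (qverts xi, qarcs xi).

Definition Theta (G H H' : digraph) (xi : G -> H) : {set {ffun G -> H'}} :=
  [set z : {ffun G -> H'} | is_hom z && (quotient_digraph z == quotient_digraph xi)].

Definition isomorphic (G H : digraph) : Prop :=
  exists f : G -> H, bijective f /\ forall u v : G, arc (f u) (f v) = arc u v.

Definition reps (D' Dr : digraph -> Prop) : Prop :=
  [/\ forall G, Dr G -> D' G,
      forall G, D' G -> exists2 G', Dr G' & isomorphic G G'
    & forall G1 G2, Dr G1 -> Dr G2 -> isomorphic G1 G2 -> G1 = G2].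

Definition hom_scheme (Dr : digraph -> Prop) (R S : digraph) :=
  forall G : digraph, Dr G -> homs G R -> homs G S.

Definition strong_scheme Dr R S (rho : hom_scheme Dr R S) : Prop :=
  forall G (hG : Dr G), injective (rho G hG).

Definition Gamma_scheme Dr R S (rho : hom_scheme Dr R S) : Prop :=
  forall G (hG : Dr G) (xi : homs G R) (v : G),
    Gam (val (rho G hG xi)) v = Gam (val xi) v.

Definition Gamma_below Dr R S : Prop :=
  exists rho : hom_scheme Dr R S, strong_scheme rho /\ Gamma_scheme rho.

From Pilot Require Import Defs.
From mathcomp Require Import all_boot.
Set Implicit Arguments. Unset Strict Implicit. Unset Printing Implicit Defensive.

(* The quotient digraph G(ζ) is determined by the blocks Γ_ζ(v) alone, so
   Θ_{G,H'}(ξ) is the set of homomorphisms G -> H' with the same blocks as ξ,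
   and it only depends on the block structure of ξ.  Both sides of the
   equivalence are thus statements about one digraph G at a time:
   - a strong Γ-scheme at G maps Θ_{G,R}(ξ) injectively into Θ_{G,S}(ξ)
     (lemma [scheme_dominated]);
   - conversely, if every Θ_{G,R}(ξ) is at most as large as Θ_{G,S}(ξ), sending
     the i-th element of Θ_{G,R}(ξ) to the i-th element of Θ_{G,S}(ξ) is a
     strong Γ-scheme at G (lemma [dominated_scheme]).
   Since schemes live on the representatives Dr while the inequality is
   demanded on all of D', we also show that the inequality is invariant under
   isomorphism of G (lemma [dominated_iso]), by precomposing with the
   isomorphism. *)

Lemma connect_homo (T T' : finType) (e : rel T) (e' : rel T') (h : T -> T') :
  (forall x y, e x y -> e' (h x) (h y)) ->
  forall x y, connect e x y -> connect e' (h x) (h y).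
Proof.
move=> he x y /connectP[p pp ->]; elim: p x pp => [|a p IH] x /=.
  by move=> _; exact: connect0.
by case/andP=> exa pa; exact: connect_trans (connect1 (he _ _ exa)) (IH _ pa).
Qed.

Section Blocks.

Variables (G H : digraph).
Implicit Types (xi : G -> H) (u v : G).

Lemma Gam_self xi v : v \in Gam xi v.
Proof. by rewrite /Gam /gammaX !inE eqxx /= connect0. Qed.

Lemma Gam_mem_eq xi u v : v \in Gam xi u -> Gam xi v = Gam xi u.
Proof.
rewrite /Gam /gammaX inE => /andP[]; rewrite inE => /eqP hv huv.
have ->: [set w | xi w == xi v] = [set w | xi w == xi u].
  by apply/setP => w; rewrite !inE hv.
set X := [set w | xi w == xi u].
have e_sym : connect_sym (fun x y => [&& x \in X, y \in X & adj x y]).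
  by apply: sym_connect_sym => x y; rewrite andbCA /adj orbC.
apply/setP => w; rewrite !inE; congr (_ && _); apply/idP/idP => hw.
  exact: connect_trans huv hw.
by rewrite e_sym in huv; exact: connect_trans huv hw.
Qed.

Lemma Gam_ext xi1 xi2 : xi1 =1 xi2 -> Gam xi1 =1 Gam xi2.
Proof.
move=> h v; apply/setP => w; rewrite /Gam /gammaX !inE !h; congr andb.
by apply: eq_connect => x y; rewrite !inE !h.
Qed.

End Blocks.

(* Two maps have the same quotient digraph iff they have the same blocks:
   the arcs of the quotient are determined by its vertex set. *)
Lemma quotient_digraphE (G H H' : digraph) (z : G -> H') (xi : G -> H) :
  (quotient_digraph z == quotient_digraph xi) = [forall v, Gam z v == Gam xi v].
Proof.
apply/eqP/forallP => [[hq _] v | h].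
  have: Gam z v \in qverts xi by rewrite -hq; apply/imsetP; exists v.
  case/imsetP => u _ e; have hv : v \in Gam xi u by rewrite -e Gam_self.
  by rewrite e (Gam_mem_eq hv).
have hq : qverts z = qverts xi by apply: eq_imset => v; exact/eqP.
by rewrite /quotient_digraph /qarcs hq.
Qed.

Lemma ThetaE (G H H' : digraph) (xi : G -> H) (z : {ffun G -> H'}) :
  (z \in Theta H' xi) = is_hom z && [forall v, Gam z v == Gam xi v].
Proof. by rewrite inE quotient_digraphE. Qed.

Lemma Theta_hom (G H H' : digraph) (xi : G -> H) (z : {ffun G -> H'}) :
  z \in Theta H' xi -> is_hom z.
Proof. by rewrite ThetaE => /andP[]. Qed.

Lemma Theta_Gam (G H H' : digraph) (xi : G -> H) (z : {ffun G -> H'}) :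
  z \in Theta H' xi -> Gam z =1 Gam xi.
Proof. by rewrite ThetaE => /andP[_ /forallP h] v; exact/eqP. Qed.

Lemma eq_Theta (G H1 H2 H' : digraph) (f1 : G -> H1) (f2 : G -> H2) :
  Gam f1 =1 Gam f2 -> Theta H' f1 = Theta H' f2.
Proof.
by move=> h; apply/setP => z; rewrite !ThetaE; under eq_forallb do rewrite h.
Qed.

Lemma Theta_self (G H : digraph) (xi : homs G H) : val xi \in Theta H (val xi).
Proof. by rewrite ThetaE (valP xi); apply/forallP => v. Qed.

Section Transport.

(* An isomorphism f : G -> G' with inverse g ([Defs.arc] is qualified because
   [arc] also names a function on sequences). *)
Variables (G G' : digraph) (f : G -> G') (g : G' -> G).
Hypotheses (fK : cancel f g) (gK : cancel g f).
Hypothesis f_arc : forall u v : G, Defs.arc (f u) (f v) = Defs.arc u v.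

Lemma g_arc (a b : G') : Defs.arc (g a) (g b) = Defs.arc a b.
Proof. by rewrite -f_arc !gK. Qed.

Definition precomp (H : digraph) (z : G -> H) : {ffun G' -> H} := [ffun x => z (g x)].

Lemma precomp_hom (H : digraph) (z : {ffun G -> H}) : is_hom z -> is_hom (precomp z).
Proof.
move=> hz; apply/forallP => a; apply/forallP => b; rewrite !ffunE -g_arc.
exact: (forallP (forallP hz (g a)) (g b)).
Qed.

Lemma Gam_precomp (H : digraph) (z : G -> H) (v : G') :
  Gam (precomp z) v = [set w | g w \in Gam z (g v)].
Proof.
apply/setP => w; rewrite (Gam_ext (ffunE _)) /Gam /gammaX !inE /=.
congr andb; apply/idP/idP.
  by move/(connect_homo (h := g)); apply => x y; rewrite !inE /adj !g_arc.
by move/(connect_homo (h := f)); rewrite !gK; apply => x y; rewrite !inE /adj -!g_arc !fK.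
Qed.

(* Precomposition with g injects Θ_{G,H'}(ξ) into Θ_{G',H'}(ξ ∘ g). *)
Lemma card_Theta_precomp (H H' : digraph) (xi : G -> H) :
  #|Theta H' xi| <= #|Theta H' (precomp xi)|.
Proof.
have inj : injective (fun z : {ffun G -> H'} => precomp z).
  move=> z1 z2 /ffunP h; apply/ffunP => v; have := h (f v); by rewrite !ffunE fK.
rewrite -(card_imset _ inj); apply/subset_leq_card/subsetP => _ /imsetP[z zin ->].
rewrite ThetaE precomp_hom ?(Theta_hom zin) //; apply/forallP => v.
by rewrite !Gam_precomp (Theta_Gam zin).
Qed.

End Transport.

Definition theta_dominated (G R S : digraph) : Prop :=
  forall xi : homs G R, #|Theta R (val xi)| <= #|Theta S (val xi)|.

Lemma dominated_iso (G G' R S : digraph) :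
  isomorphic G G' -> theta_dominated G' R S -> theta_dominated G R S.
Proof.
case=> f [[g fK gK] f_arc] dom xi.
have g_arc' := g_arc gK f_arc.
pose xi' : homs G' R := exist (@is_hom G' R) _ (precomp_hom gK f_arc (valP xi)).
have precomp_back : Theta S (precomp f (precomp g (val xi))) = Theta S (val xi).
  by apply/eq_Theta/Gam_ext => x; rewrite !ffunE fK.
apply: leq_trans (card_Theta_precomp fK gK f_arc R (val xi)) _.
apply: leq_trans (dom xi') _.
by rewrite -precomp_back; exact: (card_Theta_precomp gK fK g_arc' S (val xi')).
Qed.

(* A strong Γ-scheme at G maps each Θ_{G,R}(ξ) injectively into Θ_{G,S}(ξ). *)
Lemma scheme_dominated (G R S : digraph) (rho : homs G R -> homs G S) :
  injective rho -> (forall xi, Gam (val (rho xi)) =1 Gam (val xi)) ->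
  theta_dominated G R S.
Proof.
move=> rho_inj rho_Gam xi.
pose m (z : {ffun G -> R}) : {ffun G -> S} :=
  if insub z is Some h then val (rho h) else val (rho xi).
have mE z (hz : is_hom z) : m z = val (rho (exist _ z hz)) by rewrite /m insubT.
have m_inj : {in Theta R (val xi) &, injective m}.
  move=> z1 z2; rewrite !ThetaE => /andP[h1 _] /andP[h2 _].
  by rewrite (mE _ h1) (mE _ h2) => /val_inj /rho_inj [].
rewrite -(card_in_imset m_inj); apply/subset_leq_card/subsetP => _ /imsetP[z zin ->].
rewrite (mE _ (Theta_hom zin)) ThetaE (valP (rho _)); apply/forallP => v.
by rewrite rho_Gam /= (Theta_Gam zin).
Qed.

Lemma nth_index_inj (T1 T2 : eqType) (x0 : T2) (s1 : seq T1) (s2 : seq T2) :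
  uniq s2 -> size s1 <= size s2 ->
  {in s1 &, injective (fun x => nth x0 s2 (index x s1))}.
Proof.
move=> s2_uniq le_s12 x y hx hy /eqP.
have lt_s2 z : z \in s1 -> index z s1 < size s2.
  by move=> hz; apply: leq_trans le_s12; rewrite index_mem.
by rewrite nth_uniq ?lt_s2 // => /eqP; exact: index_inj.
Qed.

Definition some_vertex (D : digraph) : D := enum_val (Ordinal (vert_nonempty D)).

Section DominatedScheme.

Variables (G R S : digraph).
Hypothesis dom : theta_dominated G R S.

Definition partner (xi : homs G R) : {ffun G -> S} :=
  nth [ffun=> some_vertex S] (enum (Theta S (val xi)))
      (index (val xi) (enum (Theta R (val xi)))).

Lemma partner_Theta xi : partner xi \in Theta S (val xi).
Proof.
rewrite -mem_enum mem_nth // -cardE; apply: leq_trans (dom xi).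
by rewrite cardE index_mem mem_enum Theta_self.
Qed.

Definition partner_hom (xi : homs G R) : homs G S :=
  exist _ (partner xi) (Theta_hom (partner_Theta xi)).

Lemma partner_Gam xi : Gam (partner xi) =1 Gam (val xi).
Proof. exact: Theta_Gam (partner_Theta xi). Qed.

Lemma partner_inj : injective partner_hom.
Proof.
move=> xi1 xi2 /(congr1 val) /= e.
have eq_blocks : Gam (val xi1) =1 Gam (val xi2).
  by move=> v; rewrite -!partner_Gam e.
move: e; rewrite /partner (eq_Theta R eq_blocks) (eq_Theta S eq_blocks).
move/nth_index_inj => eq12; apply/val_inj/eq12.
- exact: enum_uniq.
- by rewrite -!cardE dom.
- by rewrite mem_enum -(eq_Theta R eq_blocks) Theta_self.
- by rewrite mem_enum Theta_self.
Qed.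

Lemma dominated_scheme :
  {rho : homs G R -> homs G S | injective rho /\ forall xi, Gam (val (rho xi)) =1 Gam (val xi)}.
Proof. by exists partner_hom; split; [exact: partner_inj | exact: partner_Gam]. Qed.

End DominatedScheme.

Theorem lemma2 (R S : digraph) (D' Dr : digraph -> Prop) :
  reps D' Dr ->
  (Gamma_below Dr R S <->
   forall G : digraph, D' G -> forall xi : homs G R,
     #|Theta R (val xi)| <= #|Theta S (val xi)|).
Proof.
case=> DrD' Drep _; split.
- case=> rho [rho_inj rho_Gam] G hG.
  have [G' hG' isoGG'] := Drep G hG.
  apply: dominated_iso isoGG' _.
  exact: scheme_dominated (rho_inj G' hG') (rho_Gam G' hG').
- move=> dom.
  exists (fun G hG => sval (dominated_scheme (dom G (DrD' G hG)))).
  by split=> G hG; have [] := svalP (dominated_scheme (dom G (DrD' G hG))).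
Qed.
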